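(* Let $(G,c)$ be a W-state graph and let $G_m=(V(G),E_m(G))$ be the spanning subgraph consisting of all monochromatic edges. Then $G_m$ is the disjoint union of exactly two connected components, each of which is factor-critical.
   Context: Graphs may have parallel edges but no loops. A half-edge $2$-colouring $c$ of $G$ assigns to each pair $(e,w)$ with $w$ an endpoint of edge $e$ a colour in $\{0,1\}$ (0 = blue, 1 = red). An edge $e=uv$ is bichromatic if $c(e,u)\neq c(e,v)$ and monochromatic otherwise; $E_m(G)$ is the set of monochromatic edges; standing convention: monochromatic edges are blue at both ends. A graph is matching-covered if every edge lies in some perfect matching. A W-state graph is a half-edge $2$-coloured matching-covered graph $(G,c)$ in which every perfect matching contains exactly one bichromatic edge, and every vertex $v$ is incident with an edge $e$ with $c(e,v)=1$. A graph $F$ is factor-critical if $F-u$ has a perfect matching for every vertex $u$. *)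

(* Multigraphs with parallel edges: a finite vertex type V,
   a finite edge type E and an endpoint map  ends : E -> V * V.
   A half-edge 2-colouring is  c : E -> bool -> bool, where
   c e false = colour of the half-edge (e, (ends e).1) and
   c e true  = colour of the half-edge (e, (ends e).2);  false = blue (0), true = red (1). *)
From mathcomp Require Import all_boot.
Set Implicit Arguments. Unset Strict Implicit. Unset Printing Implicit Defensive.

Section Graphs.
Variables (V E : finType) (ends : E -> V * V).

Definition loopless : Prop := forall e : E, (ends e).1 != (ends e).2.

Definition endpoint (e : E) (v : V) : bool := ((ends e).1 == v) || ((ends e).2 == v).

Definition perfect_matching_on (S : {set V}) (M : {set E}) : bool :=
  [forall e in M, ((ends e).1 \in S) && ((ends e).2 \in S)] &&
  [forall v in S, #|[set e in M | endpoint e v]| == 1].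

Definition perfect_matching (M : {set E}) : bool := perfect_matching_on [set: V] M.

Definition matching_covered : Prop :=
  forall e : E, exists M : {set E}, perfect_matching M && (e \in M).

Variable c : E -> bool -> bool.

Definition bichromatic (e : E) : bool := c e false != c e true.
Definition monochromatic (e : E) : bool := ~~ bichromatic e.

Definition red_at (e : E) (v : V) : bool :=
  (((ends e).1 == v) && c e false) || (((ends e).2 == v) && c e true).

Definition W_state : Prop :=
  matching_covered /\
  (forall M : {set E}, perfect_matching M -> #|[set e in M | bichromatic e]| = 1) /\
  (forall v : V, exists e : E, red_at e v).

Definition mono_adj : rel V := fun x y =>
  [exists e, monochromatic e && ((ends e == (x, y)) || (ends e == (y, x)))].

(* the subgraph of G_m induced on A (whose edges are the monochromatic edges with
   both ends in A) is factor-critical *)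
Definition mono_factor_critical (A : {set V}) : Prop :=
  forall u, u \in A -> exists M : {set E},
    [forall e in M, monochromatic e] && perfect_matching_on (A :\ u) M.

End Graphs.

From mathcomp Require Import all_boot zify.
Set Implicit Arguments. Unset Strict Implicit. Unset Printing Implicit Defensive.

(* G_m has no perfect matching, since every perfect matching of G contains a bichromatic
   edge; and every vertex w is missed, together with exactly one other vertex z, by a matching
   of monochromatic edges (drop the red, hence bichromatic, edge at w from a perfect matching
   containing it).  An exchange argument shows that the two vertices missed by such a
   near-perfect matching are never joined in G_m.  Its edges stay inside the components of
   G_m, so the component of w is matched perfectly except at w: it is odd and factor-critical.
   Finally, if N misses v and w, a component containing neither would be perfectly matched by
   N, hence even; so G_m has exactly the two components of v and w. *)

Lemma connect_two_classes (T : finType) (e : rel T) u v :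
  connect_sym e -> ~~ connect e u v -> (forall x, connect e u x || connect e v x) ->
  forall x y, connect e x y = (connect e u x == connect e u y).
Proof.
move=> sym_e uv cover x y.
have vE z : connect e v z = ~~ connect e u z.
  apply/idP/idP => [vz | /negPf uz]; last by have := cover z; rewrite uz.
  by apply: contra uv => /connect_trans; apply; rewrite sym_e.
have [ux | /negPf ux] := boolP (connect e u x).
  by rewrite -(same_connect sym_e ux).
have vx : connect e v x by rewrite vE ux.
by rewrite -(same_connect sym_e vx) vE; case: (connect e u y).
Qed.

Section Matchings.
Variables (V E : finType) (ends : E -> V * V).
Implicit Types (M N : {set E}) (S T : {set V}).

Definition deg (M : {set E}) (x : V) : nat := #|[set e in M | endpoint ends e x]|.

Lemma degE M x : deg M x = \sum_(e in M) endpoint ends e x.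
Proof.
rewrite /deg -sum1dep_card big_mkcondr /=; apply: eq_bigr => e _.
by case: endpoint.
Qed.

Lemma deg_setU1 g M x : g \notin M -> deg (g |: M) x = endpoint ends g x + deg M x.
Proof. by move=> gM; rewrite !degE big_setU1. Qed.

Lemma deg_setD1 f M x : f \in M -> deg M x = endpoint ends f x + deg (M :\ f) x.
Proof. by move=> fM; rewrite !degE (big_setD1 f). Qed.

Lemma deg_gt0P M x : reflect (exists2 e, e \in M & endpoint ends e x) (0 < deg M x).
Proof.
rewrite /deg card_gt0; apply: (iffP (set0Pn _)) => [[e] | [e eM ex]].
  by rewrite inE => /andP[eM ex]; exists e.
by exists e; rewrite inE eM.
Qed.

Lemma deg_le1_uniq M e f x : deg M x <= 1 -> e \in M -> f \in M ->
  endpoint ends e x -> endpoint ends f x -> e = f.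
Proof. by move/card_le1_eqP => le1 eM fM ex fx; apply: le1; rewrite inE ?eM ?fM. Qed.

Lemma perfect_matching_onP S M :
  perfect_matching_on ends S M <-> forall x, deg M x = (x \in S).
Proof.
split=> [/andP[/forall_inP inS /forall_inP degS] x | degS].
  case: (boolP (x \in S)) => xS; first exact/eqP/degS.
  apply/eqP; rewrite eqn0Ngt; apply/deg_gt0P => -[e eM].
  case/andP: (inS e eM); rewrite /endpoint => e1S e2S.
  by case/orP=> /eqP ex; rewrite -ex ?e1S ?e2S in xS.
apply/andP; split; last by apply/forall_inP => x xS; rewrite -/(deg M x) degS xS.
have inS y : 0 < deg M y -> y \in S by rewrite degS; case: (y \in S).
apply/forall_inP => e eM; apply/andP.
by split; apply/inS/deg_gt0P; exists e; rewrite // /endpoint eqxx ?orbT.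
Qed.

Definition cut_free (M : {set E}) (S : {set V}) : Prop :=
  forall e, e \in M -> ((ends e).1 \in S) = ((ends e).2 \in S).

Lemma cut_free_endpoint M S e x : cut_free M S -> e \in M -> endpoint ends e x ->
  (x \in S) = ((ends e).1 \in S).
Proof. by move=> cf eM /orP[] /eqP <-; rewrite ?(cf e eM). Qed.

Lemma deg_restrict M S x : cut_free M S ->
  deg [set e in M | (ends e).1 \in S] x = if x \in S then deg M x else 0.
Proof.
move=> cf; rewrite /deg; case: ifP => xS.
  apply: eq_card => e; rewrite !inE andbAC.
  case: (boolP ((e \in M) && endpoint ends e x)) => //= /andP[eM ex].
  by rewrite -(cut_free_endpoint cf eM ex).
apply/eqP; rewrite cards_eq0; apply/eqP/setP => e; rewrite !inE -andbA.
by apply/and3P => -[eM e1S ex]; rewrite (cut_free_endpoint cf eM ex) e1S in xS.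
Qed.

Lemma sum_eq_in (S : {set V}) a : \sum_(x in S) (a == x : nat) = (a \in S).
Proof.
rewrite big_mkcond (bigD1 a) //= eqxx big1 ?addn0 => [|x xa]; first by case: (a \in S).
by rewrite eq_sym (negbTE xa); case: (x \in S).
Qed.

Hypothesis loopl : loopless ends.

(* Double counting: every edge of M meets S in 0 or 2 vertices. *)
Lemma cut_free_even M S T : cut_free M S -> (forall x, deg M x = (x \in T)) ->
  ~~ odd #|S :&: T|.
Proof.
move=> cf degT.
have ->: #|S :&: T| = \sum_(x in S) deg M x.
  under [RHS]eq_bigr do rewrite degT.
  by rewrite -big_mkcondr -sum1_card; apply: eq_bigl => x; rewrite inE.
under eq_bigr do rewrite degE.
rewrite exchange_big /= -dvdn2; apply: dvdn_sum => e eM.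
have ends_neq := loopl e.
under eq_bigr => x _.
  have -> : nat_of_bool (endpoint ends e x) =
            ((ends e).1 == x : nat) + ((ends e).2 == x : nat).
    by rewrite /endpoint; case: eqP => [<-|] //=; rewrite eq_sym (negbTE ends_neq).
over.
by rewrite big_split /= !sum_eq_in (cf e eM) addnn dvdn2 odd_double.
Qed.

Definition other_end (e : E) (z : V) : V :=
  if (ends e).1 == z then (ends e).2 else (ends e).1.

Lemma endpoint_other_end e z : endpoint ends e z ->
  forall x, endpoint ends e x = (x == z) || (x == other_end e z).
Proof.
rewrite /endpoint /other_end => ez x.
case: (eqVneq (ends e).1 z) ez => [<- _|_ /= /eqP <-];
  by rewrite (eq_sym (ends e).1 x) (eq_sym (ends e).2 x) // orbC.
Qed.

Lemma other_end_neq e z : endpoint ends e z -> other_end e z != z.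
Proof.
have := loopl e; rewrite /endpoint /other_end.
by case: (eqVneq (ends e).1 z) => [<- | _ ne /= /eqP <-]; rewrite // eq_sym.
Qed.

Lemma deg_switch N f g w z y t :
  (forall x, deg N x = (x != w) && (x != z)) -> f \in N -> g \notin N ->
  (forall x, endpoint ends g x = (x == z) || (x == y)) ->
  (forall x, endpoint ends f x = (x == y) || (x == t)) ->
  uniq [:: w; z; y; t] ->
  forall x, deg (g |: (N :\ f)) x = (x != w) && (x != t).
Proof.
move=> degN fN gN endg endf.
rewrite /= !inE !negb_or => /and4P[/and3P[wz wy wt] /andP[zy zt] yt _] x.
have gNf : g \notin N :\ f by rewrite inE negb_and gN orbT.
rewrite deg_setU1 //; move: (deg_setD1 x fN); rewrite degN endg endf.
have excl a b : a != b -> ~~ ((x == a) && (x == b)).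
  by apply: contra => /andP[/eqP <- /eqP <-].
move: (excl _ _ wz) (excl _ _ wy) (excl _ _ wt) (excl _ _ zy) (excl _ _ zt) (excl _ _ yt).
move: (deg (N :\ f) x) => n.
by case: (x == w); case: (x == z); case: (x == y); case: (x == t) => //=; lia.
Qed.

End Matchings.

Section NearPerfectMatchings.
Variables (V E : finType) (ends : E -> V * V) (c : E -> bool -> bool).
Implicit Types (M N : {set E}).
Hypothesis loopl : loopless ends.

Local Notation deg := (deg ends).
Local Notation adj := (mono_adj ends c).

Definition mono_set M : bool := [forall e in M, monochromatic c e].

Definition near_pm M (u v : V) : bool :=
  [&& mono_set M, u != v & [forall x, deg M x == (x != u) && (x != v)]].

Definition mono_comp (x : V) : {set V} := [set y | connect adj x y].

Lemma mono_setS M N : mono_set M -> N \subset M -> mono_set N.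
Proof. by move=> /forall_inP monoM /subsetP NM; apply/forall_inP => e /NM /monoM. Qed.

Lemma mono_setU1 e M : monochromatic c e -> mono_set M -> mono_set (e |: M).
Proof. by move=> me /forall_inP monoM; apply/forall_inP => f /setU1P[-> | /monoM]. Qed.

Lemma near_pm_mono M u v : near_pm M u v -> mono_set M.
Proof. by case/and3P. Qed.

Lemma near_pm_neq M u v : near_pm M u v -> u != v.
Proof. by case/and3P. Qed.

Lemma near_pm_deg M u v x : near_pm M u v -> deg M x = (x != u) && (x != v).
Proof. by case/and3P => _ _ /forallP/(_ x)/eqP. Qed.

Lemma near_pm_endpoint M u v e x : near_pm M u v -> e \in M -> endpoint ends e x ->
  (x != u) && (x != v).
Proof.
move=> Muv eM ex; have /deg_gt0P : exists2 f, f \in M & endpoint ends f x by exists e.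
by rewrite (near_pm_deg x Muv); case: (_ && _).
Qed.

Lemma near_pm_sym M u v : near_pm M u v -> near_pm M v u.
Proof.
move=> Muv; apply/and3P; split; first exact: near_pm_mono Muv.
  by rewrite eq_sym (near_pm_neq Muv).
by apply/forallP => x; rewrite (near_pm_deg x Muv) andbC.
Qed.

Lemma mono_adj_sym : symmetric adj.
Proof. by move=> x y; apply/existsP/existsP => -[e /andP[me H]]; exists e; rewrite me orbC. Qed.

Lemma mono_connect_sym : connect_sym adj.
Proof. exact: sym_connect_sym mono_adj_sym. Qed.

Lemma mono_set_cut_free M x : mono_set M -> cut_free ends M (mono_comp x).
Proof.
move=> /forall_inP monoM e /monoM me; rewrite !inE.
have ends_adj : adj (ends e).1 (ends e).2.
  by apply/existsP; exists e; rewrite me -surjective_pairing eqxx.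
apply/idP/idP => /connect_trans; apply; first exact: connect1.
by rewrite mono_connect_sym connect1.
Qed.

Hypothesis no_mono_pm : forall M, mono_set M -> ~~ perfect_matching ends M.
Hypothesis near_pm_exists : forall w, exists z M, near_pm M w z.

Lemma near_pm_edge M u v e : near_pm M u v -> monochromatic c e ->
  endpoint ends e u -> endpoint ends e v -> False.
Proof.
move=> Muv me eu ev.
have endE x : endpoint ends e x = (x == u) || (x == v).
  move: ev; rewrite !(endpoint_other_end eu) (negbTE (near_pm_neq (near_pm_sym Muv))).
  by move=> /= /eqP ->.
have eM : e \notin M.
  by apply/negP => eM; have := near_pm_endpoint Muv eM eu; rewrite eqxx.
apply: (negP (no_mono_pm (mono_setU1 me (near_pm_mono Muv)))).
apply/perfect_matching_onP => x; rewrite inE deg_setU1 // endE (near_pm_deg x Muv).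
by case: (x == u); case: (x == v).
Qed.

Lemma near_pm_not_adj M u v : near_pm M u v -> ~~ adj u v.
Proof.
move=> Muv; apply/existsP => -[e /andP[me /orP[] /eqP endsE]];
  by apply: (near_pm_edge Muv me); rewrite /endpoint endsE eqxx ?orbT.
Qed.

(* M covers z by an edge g = zy, and N covers y by an edge f = yt; then N - f + g misses w and t
   and shares g with M, while f is not in M. *)
Lemma near_pm_exchange M u v N w z : near_pm M u v -> near_pm N w z -> z != u -> z != v ->
  exists2 N', [exists t, near_pm N' w t] & #|M :&: N| < #|M :&: N'|.
Proof.
move=> Muv Nwz zu zv.
have /forall_inP monoM := near_pm_mono Muv.
have [g gM gz] : exists2 g, g \in M & endpoint ends g z.
  by apply/deg_gt0P; rewrite (near_pm_deg z Muv) zu zv.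
set y := other_end ends g z; have gE := endpoint_other_end gz.
have gN : g \notin N.
  by apply/negP => gN; have := near_pm_endpoint Nwz gN gz; rewrite eqxx andbF.
have wy : w != y.
  apply/negP => /eqP wy; apply: (near_pm_edge Nwz (monoM g gM)) gz.
  by rewrite gE wy eqxx orbT.
have [f fN fy] : exists2 f, f \in N & endpoint ends f y.
  by apply/deg_gt0P; rewrite (near_pm_deg y Nwz) eq_sym wy (other_end_neq loopl gz).
set t := other_end ends f y; have fE := endpoint_other_end fy.
have /andP[tw tz] : (t != w) && (t != z).
  by apply: (near_pm_endpoint Nwz fN); rewrite fE eqxx orbT.
have fM : f \notin M.
  apply/negP => fM; suff fg : f = g by rewrite -fg fN in gN.
  apply: (deg_le1_uniq _ fM gM fy); last by rewrite gE eqxx orbT.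
  by rewrite (near_pm_deg y Muv); case: (_ && _).
exists (g |: (N :\ f)).
  have zy : z != y by rewrite eq_sym (other_end_neq loopl gz).
  have yt : y != t by rewrite eq_sym (other_end_neq loopl fy).
  apply/existsP; exists t; apply/and3P; split.
  - apply/mono_setU1; first exact: monoM.
    exact: mono_setS (near_pm_mono Nwz) (subsetDl N [set f]).
  - by rewrite eq_sym.
  - apply/forallP => x; apply/eqP.
    apply: (deg_switch (fun x => near_pm_deg x Nwz) fN gN gE fE).
    by rewrite /= !inE !negb_or (near_pm_neq Nwz) wy zy yt (eq_sym w) (eq_sym z) tw tz.
suff : #|g |: (M :&: N)| <= #|M :&: (g |: (N :\ f))|.
  by rewrite cardsU1 inE (negbTE gN) andbF add1n; apply.
apply/subset_leq_card/subsetP => h; rewrite !inE => /orP[/eqP -> | /andP[hM hN]].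
  by rewrite gM eqxx.
by rewrite hM hN andbT; apply/orP; right; apply: contraTneq hM => ->.
Qed.

Lemma near_pm_switch M u v w : near_pm M u v -> exists N, near_pm N w u || near_pm N w v.
Proof.
move=> Muv; pose P N := [exists z, near_pm N w z].
have [z0 [N0 N0wz0]] := near_pm_exists w.
have P0 : P N0 by apply/existsP; exists z0.
case: (arg_maxnP (fun N => #|M :&: N|) P0) => N /existsP[z Nwz] Nmax.
have [zu | zu] := eqVneq z u; first by exists N; rewrite -zu Nwz.
have [zv | zv] := eqVneq z v; first by exists N; rewrite -zv Nwz orbT.
have [N' PN' lt] := near_pm_exchange Muv Nwz zu zv.
by have := leq_trans lt (Nmax N' PN'); rewrite ltnn.
Qed.

(* Induct on a path u w ... v: by near_pm_switch, w is missed together with u, impossible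
   since uw is an edge, or with v, and the path from w is shorter. *)
Lemma near_pm_not_connect M u v : near_pm M u v -> ~~ connect adj u v.
Proof.
move=> Muv; apply/negP => /connectP[p]; elim: p u M Muv => [|w p IH] u M Muv /=.
  by move=> _ vu; move: (near_pm_neq Muv); rewrite vu eqxx.
case/andP => uw wp vE; have [N /orP[Nwu | Nwv]] := near_pm_switch w Muv.
  by move: uw; rewrite (negbTE (near_pm_not_adj (near_pm_sym Nwu))).
exact: IH Nwv wp vE.
Qed.

Lemma mono_comp_eq x y : y \in mono_comp x -> mono_comp y = mono_comp x.
Proof.
by rewrite inE => xy; apply/setP => z; rewrite !inE (same_connect mono_connect_sym xy).
Qed.

Lemma near_pm_even_comp M u v x : near_pm M u v ->
  ~~ odd #|mono_comp x :&: [set y | (y != u) && (y != v)]|.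
Proof.
move=> Muv; apply: (cut_free_even loopl (mono_set_cut_free x (near_pm_mono Muv))) => y.
by rewrite inE (near_pm_deg y Muv).
Qed.

Lemma odd_mono_comp x : odd #|mono_comp x|.
Proof.
have [z [N Nxz]] := near_pm_exists x.
have xx : x \in mono_comp x by rewrite inE connect0.
have := near_pm_even_comp x Nxz; rewrite [#|mono_comp x|](cardsD1 x) xx add1n /=.
suff -> : mono_comp x :&: [set y | (y != x) && (y != z)] = mono_comp x :\ x by [].
apply/setP => y; rewrite !inE andbCA; apply: andb_id2l => _; apply/andb_idr => xy.
by apply: contraNneq (near_pm_not_connect Nxz) => <-.
Qed.

Lemma connect_near_pm_holes M u v x : near_pm M u v -> connect adj u x || connect adj v x.
Proof.
move=> Muv; apply/negPn/negP; rewrite negb_or => /andP[ux vx].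
have := near_pm_even_comp x Muv.
suff -> : mono_comp x :&: [set y | (y != u) && (y != v)] = mono_comp x by rewrite odd_mono_comp.
apply/setIidPl/subsetP => y; rewrite !inE => xy.
by apply/andP; split; [apply: contraNneq ux | apply: contraNneq vx] => <-;
  rewrite mono_connect_sym.
Qed.

Lemma mono_comp_minus_pm u :
  exists M, mono_set M && perfect_matching_on ends (mono_comp u :\ u) M.
Proof.
have [z [N Nuz]] := near_pm_exists u.
have cf := mono_set_cut_free u (near_pm_mono Nuz).
exists [set e in N | (ends e).1 \in mono_comp u]; apply/andP; split.
  by apply: mono_setS (near_pm_mono Nuz) _; apply/subsetP => e; rewrite inE => /andP[].
apply/perfect_matching_onP => x; rewrite deg_restrict // (near_pm_deg x Nuz) !inE.
case: (boolP (connect adj u x)) => ux; rewrite ?andbT ?andbF //.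
congr nat_of_bool; apply/andb_idr => _.
by apply: contraNneq (near_pm_not_connect Nuz) => <-.
Qed.

Lemma mono_comp_factor_critical x : mono_factor_critical ends c (mono_comp x).
Proof. by move=> u /mono_comp_eq <-; apply: mono_comp_minus_pm. Qed.

Lemma mono_two_components :
  exists u v, ~~ connect adj u v /\ forall x, connect adj u x || connect adj v x.
Proof.
case: (pickP (@predT V)) => [u _ | V0].
  have [v [M Muv]] := near_pm_exists u.
  exists u, v; split=> [|x]; first exact: near_pm_not_connect Muv.
  exact: connect_near_pm_holes Muv.
have /negP[] : ~~ perfect_matching ends set0.
  by apply: no_mono_pm; apply/forall_inP => e; rewrite inE.
by apply/perfect_matching_onP => x; have := V0 x.
Qed.

End NearPerfectMatchings.

Section WState.
Variables (V E : finType) (ends : E -> V * V) (c : E -> bool -> bool).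
Hypothesis W : W_state ends c.

Lemma W_state_no_mono_pm M : mono_set c M -> ~~ perfect_matching ends M.
Proof.
move=> /forall_inP monoM; apply/negP => pmM; case: W => _ [/(_ M pmM) + _].
suff -> : [set e in M | bichromatic c e] = set0 by rewrite cards0.
by apply/setP => e; rewrite !inE; apply/negbTE/andP => -[/monoM/negP].
Qed.

Hypothesis loopl : loopless ends.
Hypothesis blue : forall e, monochromatic c e -> c e false = false.

Lemma red_at_bichromatic e w : red_at ends c e w -> bichromatic c e.
Proof.
rewrite /bichromatic; apply: contraTN => /eqP same.
have cf : c e false = false by apply: blue; rewrite /monochromatic /bichromatic same eqxx.
by rewrite /red_at -same cf !andbF.
Qed.

Lemma W_state_near_pm w : exists z M, near_pm ends c M w z.
Proof.
case: W => cover [one_bichromatic red].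
have [e red_e] := red w.
have be := red_at_bichromatic red_e.
have ew : endpoint ends e w.
  by case/orP: red_e => /andP[/eqP <- _]; rewrite /endpoint eqxx ?orbT.
have [M /andP[pmM eM]] := cover e.
exists (other_end ends e w), (M :\ e); apply/and3P; split.
- have /card_le1_eqP uniqb : #|[set f in M | bichromatic c f]| <= 1.
    by rewrite one_bichromatic.
  apply/forall_inP => f; rewrite !inE => /andP[fe fM]; apply/negP => bf.
  by move: fe; rewrite (uniqb f e) ?eqxx // inE ?fM ?eM.
- by rewrite eq_sym (other_end_neq loopl ew).
- apply/forallP => x; apply/eqP; move/perfect_matching_onP/(_ x): pmM.
  rewrite (deg_setD1 ends x eM) inE (endpoint_other_end ew).
  by case: (x == w); case: (x == other_end ends e w) => /=; lia.
Qed.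

End WState.

Theorem mainTheorem8 (V E : finType) (ends : E -> V * V) (c : E -> bool -> bool) :
  loopless ends ->
  (* standing convention: monochromatic edges are blue at both ends *)
  (forall e, monochromatic c e -> c e false = false) ->
  W_state ends c ->
  exists A B : {set V},
    [/\ A != set0, B != set0, [disjoint A & B] & A :|: B = [set: V]] /\
    (* the connected components of G_m are exactly A and B *)
    (forall x y : V, connect (mono_adj ends c) x y = ((x \in A) == (y \in A))) /\
    mono_factor_critical ends c A /\ mono_factor_critical ends c B.
Proof.
move=> loopl blue W.
have no_pm := W_state_no_mono_pm W; have near := W_state_near_pm W loopl blue.
have [u [v [uv cover]]] := mono_two_components loopl no_pm near.
exists (mono_comp ends c u), (mono_comp ends c v).
split; [split | split; [| split; exact: mono_comp_factor_critical loopl no_pm near _]].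
- by apply/set0Pn; exists u; rewrite inE connect0.
- by apply/set0Pn; exists v; rewrite inE connect0.
- rewrite -setI_eq0; apply/eqP/setP => x; rewrite !inE; apply/negbTE/andP => -[ux vx].
  by apply: (negP uv); apply: connect_trans ux _; rewrite mono_connect_sym.
- by apply/setP => x; rewrite !inE cover.
- move=> x y; rewrite !inE.
  exact: connect_two_classes (@mono_connect_sym _ _ ends c) uv cover x y.
Qed.
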